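(* For $1\le i\le n$ let $f_i:\mathbb{Z}\to\mathbb{R}$ be bounded below and such that $(\mathbb{Z},f_i)$ is a one-dimensional Ameso($0$) pair, let $a_1,\dots,a_n\ge 0$, and define $g:\mathbb{Z}^n\to\mathbb{R}$ by $g(\vec y)=\sum_{i=1}^n a_if_i(y_i)$. Then $(\mathbb{Z}^n,g)$ is an Ameso($0$) pair.
   Context: Floors and ceilings of vectors are taken componentwise. A set $D^n\subseteq\mathbb{Z}^n$ is an Ameso set if $\lceil(\vec x+\vec y)/2\rceil,\lfloor(\vec x+\vec y)/2\rfloor\in D^n$ for all $\vec x,\vec y\in D^n$. For $C\ge 0$, $(D^n,f)$ is an Ameso($C$) pair if $D^n$ is an Ameso set, $f:D^n\to\mathbb{R}$ is bounded below, and $f(\vec x)+f(\vec y)+C\ge f(\lceil(\vec x+\vec y)/2\rceil)+f(\lfloor(\vec x+\vec y)/2\rfloor)$ for all $\vec x,\vec y\in D^n$. *)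

From mathcomp Require Import all_boot all_order all_algebra.
From mathcomp Require Import reals.
Set Implicit Arguments. Unset Strict Implicit. Unset Printing Implicit Defensive.
Import Order.TTheory GRing.Theory Num.Theory.
Local Open Scope ring_scope.

Definition zvec (n : nat) := 'I_n -> int.

Definition midceil n (x y : zvec n) : zvec n :=
  fun i => Num.ceil (((x i + y i)%:~R : rat) / 2).
Definition midfloor n (x y : zvec n) : zvec n :=
  fun i => Num.floor (((x i + y i)%:~R : rat) / 2).

Definition Ameso_set n (D : zvec n -> Prop) : Prop :=
  forall x y, D x -> D y -> D (midceil x y) /\ D (midfloor x y).

Definition bounded_below_on (R : realType) n (D : zvec n -> Prop)
  (f : zvec n -> R) : Prop :=
  exists m : R, forall x, D x -> m <= f x.

Definition Ameso_pair (R : realType) (C : R) n (D : zvec n -> Prop)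
  (f : zvec n -> R) : Prop :=
  0 <= C /\ Ameso_set D /\ bounded_below_on D f /\
  forall x y, D x -> D y ->
    f (midceil x y) + f (midfloor x y) <= f x + f y + C.

Definition Zn n : zvec n -> Prop := fun _ => True.

From mathcomp Require Import all_boot all_order all_algebra.
From mathcomp Require Import reals.
Import Order.TTheory GRing.Theory Num.Theory.
Local Open Scope ring_scope.

(* The midpoint operations act coordinatewise, so the Ameso inequality of
   [g y = \sum_i a i * f i (y i)] is the sum over [i] of the one-dimensional
   inequalities for [f i], scaled by [a i >= 0]. *)

Lemma Ameso_pair1_midpoint {R : realType} {C : R} {g : int -> R} (s t : int) :
  Ameso_pair C (@Zn 1%N) (fun v : zvec 1 => g (v ord0)) ->
  g (Num.ceil (((s + t)%:~R : rat) / 2)) + g (Num.floor (((s + t)%:~R : rat) / 2))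
    <= g s + g t + C.
Proof. by case=> _ [_ [_ mid]]; exact: (mid (fun=> s) (fun=> t)). Qed.

Section WeightedSum.

Context {R : realType} {n : nat} {f : 'I_n -> int -> R} {a : 'I_n -> R}.
Hypothesis a_ge0 : forall i, 0 <= a i.

Lemma bounded_below_weighted_sum :
  (forall i, exists m : R, forall z : int, m <= f i z) ->
  bounded_below_on (@Zn n) (fun y : zvec n => \sum_(i < n) a i * f i (y i)).
Proof.
move=> f_bounded; have [m m_le] := fin_all_exists f_bounded.
exists (\sum_(i < n) a i * m i) => y _.
by apply: ler_sum => i _; rewrite ler_wpM2l.
Qed.

Lemma Ameso_pair_weighted_sum {C : 'I_n -> R} :
  (forall i, Ameso_pair (C i) (@Zn 1%N) (fun v : zvec 1 => f i (v ord0))) ->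
  Ameso_pair (\sum_(i < n) a i * C i) (@Zn n)
    (fun y : zvec n => \sum_(i < n) a i * f i (y i)).
Proof.
move=> f_Ameso; split; last split; last split.
- by apply: sumr_ge0 => i _; rewrite mulr_ge0 // (proj1 (f_Ameso i)).
- by [].
- apply: bounded_below_weighted_sum => i.
  by have [_ [_ [[m m_le] _]]] := f_Ameso i; exists m => z; exact: (m_le (fun=> z)).
- move=> x y _ _; rewrite -!big_split /=; apply: ler_sum => i _.
  by rewrite -!mulrDr ler_wpM2l // (Ameso_pair1_midpoint (x i) (y i) (f_Ameso i)).
Qed.

End WeightedSum.

Theorem mainTheorem9 (R : realType) (n : nat) (f : 'I_n -> int -> R)
  (a : 'I_n -> R) :
  (forall i, exists m : R, forall z : int, m <= f i z) ->
  (forall i, Ameso_pair (0 : R) (@Zn 1%N) (fun v : zvec 1 => f i (v ord0))) ->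
  (forall i, 0 <= a i) ->
  Ameso_pair (0 : R) (@Zn n) (fun y : zvec n => \sum_(i < n) a i * f i (y i)).
Proof.
(* Boundedness of each [f i] is already part of its Ameso pair. *)
move=> _ f_Ameso a_ge0.
have := Ameso_pair_weighted_sum a_ge0 f_Ameso.
by rewrite big1 // => i _; rewrite mulr0.
Qed.
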